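(* For every set $J\subset\mathbb{Z}^+$, every integer $s\geqslant1$ and every $0<p<1$, $h_J(s,p)\leqslant h_J^0(s,p)$, where \[ h_J^0(s,p)=\frac{(1-p)^s}{p^2}\left(\frac{p^2}{(1-p)^{s+1}}+\frac{p}{s}\frac{1}{(1-p)^s}-\sum_{k\in J}k\frac{(k+s-2)!}{(k-1)!\,s!}p^k\right). \]
   Context: $\mathbb{Z}^+$ is the set of positive integers. For $J\subset\mathbb{Z}^+$, $s\in\mathbb{Z}^+$, $0<p<1$: $h_J(s,p)=\frac{(1-p)^s}{p^2}\sum_{k\in\mathbb{Z}^+\setminus J}\frac{k^2}{(k+s)^2}\binom{k+s}{k}p^k$. *)

From Stdlib Require Import Reals Arith Factorial.
From Coquelicot Require Import Coquelicot.
Open Scope R_scope.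

(* J ⊂ Z^+ is given by its indicator J : nat -> bool; only its values on
   k >= 1 matter.  Series a = sum_{n>=0} a n (Coquelicot).  We index
   k = n + 1 so that k ranges over Z^+. *)

Definition hterm (s : nat) (p : R) (k : nat) : R :=
  (INR k)^2 / (INR (k + s))^2 * Binomial.C (k + s) k * p ^ k.

Definition h (J : nat -> bool) (s : nat) (p : R) : R :=
  (1 - p) ^ s / p ^ 2 *
  Series (fun n => let k := S n in if J k then 0 else hterm s p k).

Definition h0term (s : nat) (p : R) (k : nat) : R :=
  INR k * INR (fact (k + s - 2)) / (INR (fact (k - 1)) * INR (fact s)) * p ^ k.

Definition h0 (J : nat -> bool) (s : nat) (p : R) : R :=
  (1 - p) ^ s / p ^ 2 *
  (p ^ 2 / (1 - p) ^ (s + 1) + p / INR s * (1 / (1 - p) ^ s)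
   - Series (fun n => let k := S n in if J k then h0term s p k else 0)).

From Stdlib Require Import Reals Lra Lia Factorial.
From Coquelicot Require Import Coquelicot.
Open Scope R_scope.

(* Termwise, hterm s p k = (k+s-1)/(k+s) * h0term s p k <= h0term s p k, so
   deleting the indices of J from both sums preserves the inequality, and it
   suffices that the full series of h0term sums to
   p^2/(1-p)^(s+1) + p/(s (1-p)^s).  With s = t+1, h0term is a combination of
   the terms of the two negative binomial series
   sum_m C(m+t', m) p^m = (1-p)^-(t'+1) for t' = t, t+1, which follow by
   induction on t' from Pascal's rule. *)

Lemma sum_n_le_succ (a : nat -> R) : (forall n, 0 <= a n) ->
  forall n, sum_n a n <= sum_n a (S n).
Proof.
  intros Ha n; rewrite sum_Sn; specialize (Ha (S n)); unfold plus; simpl; lra.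
Qed.

Lemma Series_split_le (P : nat -> bool) (a b : nat -> R) (l : R) :
  (forall n, 0 <= b n <= a n) -> is_series a l ->
  Series (fun n => if P n then 0 else b n)
    <= l - Series (fun n => if P n then a n else 0).
Proof.
  intros Hba Ha.
  assert (Hex : ex_series a) by now exists l.
  assert (Hsel : forall c : nat -> R, (forall n, 0 <= c n <= a n) -> ex_series c).
  { intros c Hc; apply (ex_series_le c a); [|exact Hex].
    intro n; change (norm (c n)) with (Rabs (c n)).
    rewrite Rabs_pos_eq; apply Hc. }
  set (aP := fun n => if P n then a n else 0).
  set (aQ := fun n => if P n then 0 else a n).
  assert (HaP : ex_series aP).
  { apply Hsel; intro n; unfold aP; specialize (Hba n); destruct (P n); lra. }
  assert (HaQ : ex_series aQ).
  { apply Hsel; intro n; unfold aQ; specialize (Hba n); destruct (P n); lra. }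
  assert (Hsum : Series aP + Series aQ = l).
  { rewrite <- Series_plus by assumption.
    rewrite <- (is_series_unique a l Ha); apply Series_ext.
    intro n; unfold aP, aQ; destruct (P n); ring. }
  assert (HbQ : Series (fun n => if P n then 0 else b n) <= Series aQ).
  { apply Series_le; [|exact HaQ].
    intro n; unfold aQ; specialize (Hba n); destruct (P n); lra. }
  fold aP; lra.
Qed.

Definition nbinom (t m : nat) : R :=
  INR (fact (m + t)) / (INR (fact m) * INR (fact t)).

Lemma nbinom_ge0 t m : 0 <= nbinom t m.
Proof.
  apply Rdiv_le_0_compat; [apply Rlt_le, INR_fact_lt_0|].
  apply Rmult_lt_0_compat; apply INR_fact_lt_0.
Qed.

Lemma nbinom_0_l m : nbinom 0 m = 1.
Proof.
  unfold nbinom; rewrite Nat.add_0_r; simpl (INR (fact 0)).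
  field; apply INR_fact_neq_0.
Qed.

Lemma nbinom_0_r t : nbinom t 0 = 1.
Proof.
  unfold nbinom; rewrite Nat.add_0_l; simpl (INR (fact 0)).
  field; apply INR_fact_neq_0.
Qed.

Lemma nbinom_pascal t m : nbinom (S t) (S m) = nbinom (S t) m + nbinom t (S m).
Proof.
  unfold nbinom.
  replace (S m + S t)%nat with (S (S (m + t))) by lia.
  replace (m + S t)%nat with (S (m + t)) by lia.
  replace (S m + t)%nat with (S (m + t)) by lia.
  rewrite !fact_simpl, !mult_INR, !S_INR, !plus_INR.
  pose proof (INR_fact_lt_0 t); pose proof (INR_fact_lt_0 m).
  pose proof (pos_INR m); pose proof (pos_INR t).
  field; repeat split; lra.
Qed.

Section NegativeBinomialSeries.

Variable p : R.

Definition nbterm (t m : nat) : R := nbinom t m * p ^ m.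

Lemma nbterm_partial_sum t N :
  (1 - p) * sum_n (nbterm (S t)) N = sum_n (nbterm t) N - p * nbterm (S t) N.
Proof.
  unfold nbterm; induction N as [|N IHN].
  - rewrite !sum_O, !nbinom_0_r; ring.
  - rewrite !sum_Sn; unfold plus; simpl.
    rewrite Rmult_plus_distr_l, IHN, nbinom_pascal; simpl; ring.
Qed.

Hypothesis Hp : 0 < p < 1.

Lemma nbterm_ge0 t m : 0 <= nbterm t m.
Proof. apply Rmult_le_pos; [apply nbinom_ge0 | apply pow_le; lra]. Qed.

Lemma is_series_nbterm t : is_series (nbterm t) (/ (1 - p) ^ S t).
Proof.
  induction t as [|t IHt].
  - apply (is_series_ext (fun m => p ^ m)).
    + intro m; unfold nbterm; rewrite nbinom_0_l, Rmult_1_l; reflexivity.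
    + rewrite pow_1; apply is_series_geom; rewrite Rabs_pos_eq; lra.
  - set (L := / (1 - p) ^ S t) in IHt.
    assert (Hbound : forall N, sum_n (nbterm (S t)) N <= L / (1 - p)).
    { intro N; apply (Rmult_le_reg_l (1 - p)); [lra|].
      replace ((1 - p) * (L / (1 - p))) with L by (field; lra).
      rewrite nbterm_partial_sum.
      pose proof (is_lim_seq_incr_compare (sum_n (nbterm t)) L IHt
                    (sum_n_le_succ _ (nbterm_ge0 t)) N).
      pose proof (Rmult_le_pos _ _ (Rlt_le _ _ (proj1 Hp)) (nbterm_ge0 (S t) N)).
      lra. }
    destruct (ex_finite_lim_seq_incr _ _
                (sum_n_le_succ _ (nbterm_ge0 (S t))) Hbound) as [l Hl].
    assert (Hscaled :
      is_lim_seq (fun N => (1 - p) * sum_n (nbterm (S t)) N) ((1 - p) * l))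
      by exact (is_lim_seq_scal_l _ (1 - p) l Hl).
    assert (Htail :
      is_lim_seq (fun N => sum_n (nbterm t) N - p * nbterm (S t) N) (L - p * 0)).
    { apply is_lim_seq_minus'; [exact IHt|].
      apply (is_lim_seq_scal_l _ p 0), ex_series_lim_0; now exists l. }
    assert (Hl_eq : Finite ((1 - p) * l) = Finite (L - p * 0)).
    { rewrite <- (is_lim_seq_unique _ _ Hscaled).
      rewrite <- (is_lim_seq_unique _ _ Htail).
      apply Lim_seq_ext, nbterm_partial_sum. }
    injection Hl_eq as Hl_eq.
    replace (/ (1 - p) ^ S (S t)) with l; [exact Hl|].
    apply (Rmult_eq_reg_l (1 - p)); [|lra].
    rewrite Hl_eq; unfold L; simpl.
    field; split; [apply pow_nonzero|]; lra.
Qed.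

End NegativeBinomialSeries.

Lemma h0term_nbterm t p n :
  h0term (S t) p (S n)
  = p * nbterm p (S t) n - INR t / INR (S t) * p * nbterm p t n.
Proof.
  unfold h0term, nbterm, nbinom.
  replace (S n + S t - 2)%nat with (n + t)%nat by lia.
  replace (S n - 1)%nat with n by lia.
  replace (n + S t)%nat with (S (n + t)) by lia.
  rewrite !fact_simpl, !mult_INR, !S_INR, !plus_INR.
  pose proof (INR_fact_lt_0 (n + t)); pose proof (INR_fact_lt_0 n).
  pose proof (INR_fact_lt_0 t); pose proof (pos_INR n); pose proof (pos_INR t).
  simpl pow; field; repeat split; lra.
Qed.

Lemma is_series_h0term t p : 0 < p < 1 ->
  is_series (fun n => h0term (S t) p (S n))
    (p ^ 2 / (1 - p) ^ (S t + 1) + p / INR (S t) * (1 / (1 - p) ^ S t)).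
Proof.
  intro Hp.
  assert (Hcomb := is_series_minus _ _ _ _
    (is_series_scal_l p _ _ (is_series_nbterm p Hp (S t)))
    (is_series_scal_l (INR t / INR (S t) * p) _ _ (is_series_nbterm p Hp t))).
  eapply is_series_ext; [intro n; symmetry; apply h0term_nbterm|].
  replace (p ^ 2 / (1 - p) ^ (S t + 1) + p / INR (S t) * (1 / (1 - p) ^ S t))
    with (p * / (1 - p) ^ S (S t) - INR t / INR (S t) * p * / (1 - p) ^ S t).
  - exact Hcomb.
  - rewrite Nat.add_1_r, S_INR; simpl pow.
    pose proof (pos_INR t); pose proof (pow_lt (1 - p) t).
    field; repeat split; lra.
Qed.

Lemma hterm_h0term t p n :
  hterm (S t) p (S n)
  = INR (S (n + t)) / INR (S (S (n + t))) * h0term (S t) p (S n).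
Proof.
  unfold hterm, h0term, Binomial.C.
  replace (S n + S t - S n)%nat with (S t) by lia.
  replace (S n + S t - 2)%nat with (n + t)%nat by lia.
  replace (S n - 1)%nat with n by lia.
  replace (S n + S t)%nat with (S (S (n + t))) by lia.
  rewrite !fact_simpl, !mult_INR, !S_INR, !plus_INR.
  pose proof (INR_fact_lt_0 (n + t)); pose proof (INR_fact_lt_0 n).
  pose proof (INR_fact_lt_0 t); pose proof (pos_INR n); pose proof (pos_INR t).
  field; repeat split; lra.
Qed.

Lemma h0term_ge0 s p k : 0 <= p -> 0 <= h0term s p k.
Proof.
  intro Hp; unfold h0term.
  apply Rmult_le_pos; [|now apply pow_le].
  apply Rdiv_le_0_compat.
  - apply Rmult_le_pos; [apply pos_INR | apply pos_INR].
  - apply Rmult_lt_0_compat; apply INR_fact_lt_0.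
Qed.

Lemma hterm_bounds t p n : 0 <= p ->
  0 <= hterm (S t) p (S n) <= h0term (S t) p (S n).
Proof.
  intro Hp; rewrite hterm_h0term.
  pose proof (h0term_ge0 (S t) p (S n) Hp).
  assert (0 <= INR (S (n + t)) / INR (S (S (n + t))) <= 1).
  { rewrite (S_INR (S (n + t))); pose proof (pos_INR (S (n + t))).
    split; [apply Rdiv_le_0_compat; lra|].
    rewrite <- Rdiv_le_1; lra. }
  split; [apply Rmult_le_pos; lra|].
  rewrite <- (Rmult_1_l (h0term _ _ _)) at 2; apply Rmult_le_compat_r; lra.
Qed.

Theorem lemma3 (J : nat -> bool) (s : nat) (p : R) :
  (1 <= s)%nat -> 0 < p < 1 -> h J s p <= h0 J s p.
Proof.
  intros Hs Hp; destruct s as [|t]; [lia|].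
  unfold h, h0; apply Rmult_le_compat_l.
  - apply Rdiv_le_0_compat; [apply pow_le | apply pow_lt]; lra.
  - apply (Series_split_le (fun n => J (S n)) _ (fun n => hterm (S t) p (S n))).
    + intro n; apply hterm_bounds; lra.
    + now apply is_series_h0term.
Qed.
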